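(* In a generalised differential Seely category, the family $\mathscr D^X_A:W(X,A)\to\,!^SW(X,A)$, for $X\in\mathscr C$, $A\in\mathcal L$, is a natural transformation $W\Rightarrow\,!^S W$: for every morphism $(f,u):(X,A)\to(Y,B)$ of $LS(\mathscr C)$, $\mathscr D^X_A;!^S(W(f,u))=W(f,u);\mathscr D^Y_B$.
   Context: Composition is diagrammatic; monoidal categories are strict. Setting: an LNL adjunction $\mathcal F\dashv\mathcal U$, $\mathcal F:\mathscr C\to\mathcal L$, between cartesian $(\mathscr C,\times,I)$ and symmetric monoidal $(\mathcal L,\otimes,1)$; $\mathcal U$ lax monoidal via $n_{A,B}:\mathcal U(A)\times\mathcal U(B)\to\mathcal U(A\otimes B)$; $\mathcal F$ strong monoidal via isomorphisms $m_{X,Y}:\mathcal F(X)\otimes\mathcal F(Y)\to\mathcal F(X\times Y)$, $m_1$; unit $\eta$; comonad $!=\mathcal F\mathcal U$; $\mathbf c_X:=\mathcal F(\Delta_X);m_{X,X}^{-1}$, $\mathbf w_X:=\mathcal F(t_X);m_1^{-1}$. $LS(\mathscr C)$: objects $(X,A)$; morphisms $(f,u):(X,A)\to(Y,B)$ with $f:X\to Y$, $u:\mathcal F(X)\otimes A\to B$; composition $(f,u);(g,v)=(f;g,(\mathbf c_X\otimes\mathrm{id}_A);(\mathcal F(f)\otimes u);v)$; identity $(\mathrm{id}_X,\mathbf w_X\otimes\mathrm{id}_A)$; $\mathbf{ls}(f,u)=f$; vertical morphisms over $X$ are $(\mathrm{id}_X,u)$. With biproducts $\oplus$ in $\mathcal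 L$: fibrewise injections $\iota^X_i=(\mathrm{id}_X,\mathbf w_X\otimes\iota_i)$; products in $LS(\mathscr C)$: $(X\times Y,A\oplus B)$, projections $(\pi_i,\mathbf w_{X\times Y}\otimes\pi_i)$. The functor $!^S:LS(\mathscr C)\to LS(\mathscr C)$: $!^S(X,A)=(X,!A)$, $!^S(f,u)=(f,(\mathcal F(\eta_X)\otimes\mathrm{id}_{!A});m_{\mathcal U\mathcal F(X),\mathcal U(A)};\mathcal F(n_{\mathcal F(X),A});!u)$. GDSC: $\mathcal L$ additive (CMon-enriched, $\otimes$ bilinear) with finite products, and a functor $\mathcal T:\mathscr C\to LS(\mathscr C)$ with: (t.1) $\mathbf{ls}\circ\mathcal T=\mathrm{id}$, so $\mathcal T(X)=(X,\lambda(X))$, and $\varphi_{X,Y}:=\langle\mathcal T(\pi_1),\mathcal T(\pi_2)\rangle:\mathcal T(X\times Y)\to(X\times Y,\lambda(X)\oplus\lambda(Y))$ is an isomorphism; (t.2) $\mathcal T(\mathcal U(A))=(\mathcal U(A),A)$; (t.3) with $i^{X,Y}_2:=\iota^{X\times Y}_2;\varphi^{-1}_{X,Y}$, comprehension $⦃(f,u)⦄:=\langle\pi_1;f,(\eta_X\times\mathrm{id}_{\mathcal U(A)});n_{\mathcal F(X),A};\mathcal U(u)\rangle:X\times\mathcal U(A)\to Y\times\mathcal U(B)$, weakening functor $W(X,A):=(X\times\mathcal U(A),A)$, $W(f,u):=(⦃(f,u)⦄,(\mathcal F(\pi_1)\otimes\mathrm{id}_A);u)$: $W(f,u);i^{Y,\mathcal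 U(B)}_2=i^{X,\mathcal U(A)}_2;\mathcal T(⦃(f,u)⦄)$. Differential: for $h:X\to Y$ with $\mathcal T(h)=(h,v)$, $\mathrm D(h):=(\mathrm{id}_X,v)$; for $h:X\times Y\to Z$, $\mathrm D_2(h):=i^{X,Y}_2;\mathrm D(h)$. Define $\mathscr D^X_A:=\mathrm D_2(\pi_2;\eta_{\mathcal U(A)}):(X\times\mathcal U(A),A)\to(X\times\mathcal U(A),!A)$, where $\pi_2;\eta_{\mathcal U(A)}:X\times\mathcal U(A)\to\mathcal U(!A)$. *)

(* Composition is diagrammatic:
   [f ;; g] means "first f, then g". Equality of morphisms is Leibniz. *)
From Stdlib Require Import Utf8.

Set Implicit Arguments.
Unset Strict Implicit.

Record Category := {
  ob :> Type;
  hom : ob -> ob -> Type;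
  comp : forall {A B C}, hom A B -> hom B C -> hom A C;
  idm : forall A, hom A A;
  comp_id_l : forall A B (f : hom A B), comp (idm A) f = f;
  comp_id_r : forall A B (f : hom A B), comp f (idm B) = f;
  comp_assoc : forall A B C D (f : hom A B) (g : hom B C) (h : hom C D),
      comp (comp f g) h = comp f (comp g h) }.

Arguments hom {c} _ _.
Arguments comp {c A B C} _ _.
Arguments idm {c} A.

Notation "f ;; g" := (comp f g) (at level 50, left associativity).

(** The canonical morphism induced by an equality of objects (identity
    transported along the equality).  Used to express strictness. *)
Definition eq_hom {C : Category} {A B : C} (e : A = B) : hom A B :=
  match e in _ = B' return hom A B' with eq_refl => idm A end.

Record Functor (C D : Category) := {
  fob :> C -> D;
  fmap : forall {A B : C}, hom A B -> hom (fob A) (fob B);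
  fmap_id : forall A, fmap (idm A) = idm (fob A);
  fmap_comp : forall A B E (f : hom A B) (g : hom B E),
      fmap (f ;; g) = fmap f ;; fmap g }.

Arguments fmap {C D} _ {A B} _.

Record CartCat := {
  cc :> Category;
  cprod : cc -> cc -> cc;
  p1 : forall X Y, hom (cprod X Y) X;
  p2 : forall X Y, hom (cprod X Y) Y;
  pair : forall {Z X Y}, hom Z X -> hom Z Y -> hom Z (cprod X Y);
  pair_p1 : forall Z X Y (f : hom Z X) (g : hom Z Y), pair f g ;; p1 X Y = f;
  pair_p2 : forall Z X Y (f : hom Z X) (g : hom Z Y), pair f g ;; p2 X Y = g;
  pair_uniq : forall Z X Y (h : hom Z (cprod X Y)),
      h = pair (h ;; p1 X Y) (h ;; p2 X Y);
  cterm : cc;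
  bang : forall X, hom X cterm;
  bang_uniq : forall X (h : hom X cterm), h = bang X }.

Arguments cprod {c} _ _.
Arguments p1 {c} X Y.
Arguments p2 {c} X Y.
Arguments pair {c Z X Y} _ _.
Arguments cterm {c}.
Arguments bang {c} X.

Section CartDefs.
Context {C : CartCat}.
Definition prodm {X Y X' Y' : C} (f : hom X X') (g : hom Y Y') :
  hom (cprod X Y) (cprod X' Y') := pair (p1 X Y ;; f) (p2 X Y ;; g).
Definition diag (X : C) : hom X (cprod X X) := pair (idm X) (idm X).
Definition cassoc (X Y Z : C) : hom (cprod (cprod X Y) Z) (cprod X (cprod Y Z)) :=
  pair (p1 _ _ ;; p1 X Y) (pair (p1 _ _ ;; p2 X Y) (p2 _ Z)).
Definition cswap (X Y : C) : hom (cprod X Y) (cprod Y X) := pair (p2 X Y) (p1 X Y).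
End CartDefs.

Record SSMC := {
  sc :> Category;
  tens : sc -> sc -> sc;
  tensm : forall {A B A' B'}, hom A A' -> hom B B' -> hom (tens A B) (tens A' B');
  tensm_id : forall A B, tensm (idm A) (idm B) = idm (tens A B);
  tensm_comp : forall A B A' B' A'' B'' (f : hom A A') (f' : hom A' A'')
      (g : hom B B') (g' : hom B' B''),
      tensm (f ;; f') (g ;; g') = tensm f g ;; tensm f' g';
  munit : sc;
  assoc_ob : forall A B C, tens (tens A B) C = tens A (tens B C);
  lunit_ob : forall A, tens munit A = A;
  runit_ob : forall A, tens A munit = A;
  assoc_nat : forall A B C A' B' C' (f : hom A A') (g : hom B B') (h : hom C C'),
      tensm (tensm f g) h ;; eq_hom (assoc_ob A' B' C')
      = eq_hom (assoc_ob A B C) ;; tensm f (tensm g h);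
  lunit_nat : forall A B (f : hom A B),
      tensm (idm munit) f ;; eq_hom (lunit_ob B) = eq_hom (lunit_ob A) ;; f;
  runit_nat : forall A B (f : hom A B),
      tensm f (idm munit) ;; eq_hom (runit_ob B) = eq_hom (runit_ob A) ;; f;
  sym : forall A B, hom (tens A B) (tens B A);
  sym_nat : forall A B A' B' (f : hom A A') (g : hom B B'),
      tensm f g ;; sym A' B' = sym A B ;; tensm g f;
  sym_inv : forall A B, sym A B ;; sym B A = idm (tens A B);
  sym_hexagon : forall A B C,
      sym A (tens B C)
      = eq_hom (eq_sym (assoc_ob A B C)) ;; tensm (sym A B) (idm C)
        ;; eq_hom (assoc_ob B A C) ;; tensm (idm B) (sym A C)
        ;; eq_hom (eq_sym (assoc_ob B C A)) }.

Arguments tens {s} _ _.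
Arguments tensm {s A B A' B'} _ _.
Arguments munit {s}.
Arguments assoc_ob {s} A B C.
Arguments lunit_ob {s} A.
Arguments runit_ob {s} A.
Arguments sym {s} A B.

Notation "A ⊗ B" := (tens A B) (at level 40, left associativity).
Notation "f ⊗ₘ g" := (tensm f g) (at level 40, left associativity).

Record AddBiprod (L : SSMC) := {
  zero : forall A B : L, hom A B;
  plus : forall {A B : L}, hom A B -> hom A B -> hom A B;
  plus_assoc : forall A B (f g h : hom A B), plus (plus f g) h = plus f (plus g h);
  plus_comm : forall A B (f g : hom A B), plus f g = plus g f;
  plus_zero_l : forall A B (f : hom A B), plus (zero A B) f = f;
  comp_plus_l : forall A B C (f g : hom A B) (h : hom B C),
      plus f g ;; h = plus (f ;; h) (g ;; h);
  comp_plus_r : forall A B C (f : hom A B) (g h : hom B C),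
      f ;; plus g h = plus (f ;; g) (f ;; h);
  comp_zero_l : forall A B C (h : hom B C), zero A B ;; h = zero A C;
  comp_zero_r : forall A B C (f : hom A B), f ;; zero B C = zero A C;
  tens_plus_l : forall A B A' B' (f g : hom A A') (h : hom B B'),
      plus f g ⊗ₘ h = plus (f ⊗ₘ h) (g ⊗ₘ h);
  tens_plus_r : forall A B A' B' (f : hom A A') (g h : hom B B'),
      f ⊗ₘ plus g h = plus (f ⊗ₘ g) (f ⊗ₘ h);
  tens_zero_l : forall A B A' B' (h : hom B B'), zero A A' ⊗ₘ h = zero _ _;
  tens_zero_r : forall A B A' B' (f : hom A A'), f ⊗ₘ zero B B' = zero _ _;
  bp : L -> L -> L;
  bpi1 : forall A B, hom (bp A B) A;
  bpi2 : forall A B, hom (bp A B) B;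
  bpair : forall {C A B}, hom C A -> hom C B -> hom C (bp A B);
  bpair_pi1 : forall C A B (f : hom C A) (g : hom C B), bpair f g ;; bpi1 A B = f;
  bpair_pi2 : forall C A B (f : hom C A) (g : hom C B), bpair f g ;; bpi2 A B = g;
  bpair_uniq : forall C A B (h : hom C (bp A B)),
      h = bpair (h ;; bpi1 A B) (h ;; bpi2 A B);
  binj1 : forall A B, hom A (bp A B);
  binj2 : forall A B, hom B (bp A B);
  binj1_pi1 : forall A B, binj1 A B ;; bpi1 A B = idm A;
  binj1_pi2 : forall A B, binj1 A B ;; bpi2 A B = zero A B;
  binj2_pi1 : forall A B, binj2 A B ;; bpi1 A B = zero B A;
  binj2_pi2 : forall A B, binj2 A B ;; bpi2 A B = idm B;
  bp_sum : forall A B,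
      plus (bpi1 A B ;; binj1 A B) (bpi2 A B ;; binj2 A B) = idm (bp A B);
  lterm : L;
  lbang : forall A, hom A lterm;
  lbang_uniq : forall A (h : hom A lterm), h = lbang A }.

Arguments bp {L} _ _ _.
Arguments bpi1 {L} _ A B.
Arguments bpi2 {L} _ A B.
Arguments bpair {L} _ {C A B} _ _.
Arguments binj1 {L} _ A B.
Arguments binj2 {L} _ A B.

Record LNL := {
  LC : CartCat;
  LL : SSMC;
  F : Functor LC LL;
  U : Functor LL LC;
  eta : forall X : LC, hom X (U (F X));
  eps : forall A : LL, hom (F (U A)) A;
  eta_nat : forall X Y (f : hom X Y), f ;; eta Y = eta X ;; fmap U (fmap F f);
  eps_nat : forall A B (g : hom A B), fmap F (fmap U g) ;; eps B = eps A ;; g;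
  triangle_F : forall X, fmap F (eta X) ;; eps (F X) = idm (F X);
  triangle_U : forall A, eta (U A) ;; fmap U (eps A) = idm (U A);
  m : forall X Y : LC, hom (F X ⊗ F Y) (F (cprod X Y));
  m_inv : forall X Y : LC, hom (F (cprod X Y)) (F X ⊗ F Y);
  m_iso1 : forall X Y, m X Y ;; m_inv X Y = idm _;
  m_iso2 : forall X Y, m_inv X Y ;; m X Y = idm _;
  m1 : hom munit (F cterm);
  m1_inv : hom (F cterm) munit;
  m1_iso1 : m1 ;; m1_inv = idm _;
  m1_iso2 : m1_inv ;; m1 = idm _;
  m_nat : forall X Y X' Y' (f : hom X X') (g : hom Y Y'),
      fmap F f ⊗ₘ fmap F g ;; m X' Y' = m X Y ;; fmap F (prodm f g);
  m_assoc : forall X Y Z,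
      m X Y ⊗ₘ idm (F Z) ;; m (cprod X Y) Z ;; fmap F (cassoc X Y Z)
      = eq_hom (assoc_ob (F X) (F Y) (F Z)) ;; idm (F X) ⊗ₘ m Y Z ;; m X (cprod Y Z);
  m_lunit : forall X,
      m1 ⊗ₘ idm (F X) ;; m cterm X ;; fmap F (p2 cterm X) = eq_hom (lunit_ob (F X));
  m_runit : forall X,
      idm (F X) ⊗ₘ m1 ;; m X cterm ;; fmap F (p1 X cterm) = eq_hom (runit_ob (F X));
  m_sym : forall X Y, sym (F X) (F Y) ;; m Y X = m X Y ;; fmap F (cswap X Y);
  n : forall A B : LL, hom (cprod (U A) (U B)) (U (A ⊗ B));
  n1 : hom cterm (U munit);
  n_nat : forall A B A' B' (f : hom A A') (g : hom B B'),
      prodm (fmap U f) (fmap U g) ;; n A' B' = n A B ;; fmap U (f ⊗ₘ g);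
  n_assoc : forall A B C,
      prodm (n A B) (idm (U C)) ;; n (A ⊗ B) C ;; fmap U (eq_hom (assoc_ob A B C))
      = cassoc (U A) (U B) (U C) ;; prodm (idm (U A)) (n B C) ;; n A (B ⊗ C);
  n_lunit : forall A,
      prodm n1 (idm (U A)) ;; n munit A ;; fmap U (eq_hom (lunit_ob A)) = p2 cterm (U A);
  n_runit : forall A,
      prodm (idm (U A)) n1 ;; n A munit ;; fmap U (eq_hom (runit_ob A)) = p1 (U A) cterm;
  n_sym : forall A B, cswap (U A) (U B) ;; n B A = n A B ;; fmap U (sym A B);
  eta_mon : forall X Y,
      eta (cprod X Y) = prodm (eta X) (eta Y) ;; n (F X) (F Y) ;; fmap U (m X Y);
  eta_mon1 : eta cterm = n1 ;; fmap U m1;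
  eps_mon : forall A B,
      m (U A) (U B) ;; fmap F (n A B) ;; eps (A ⊗ B) = eps A ⊗ₘ eps B;
  eps_mon1 : m1 ;; fmap F n1 ;; eps munit = idm munit }.

Arguments eta {l} X.
Arguments eps {l} A.
Arguments m {l} X Y.
Arguments m_inv {l} X Y.
Arguments m1 {l}.
Arguments m1_inv {l}.
Arguments n {l} A B.
Arguments n1 {l}.

(** * The category LS(C) of linear (simple) slices, given by its
      hom-sets and composition.  An object is a pair (X, A), a morphism
      (X,A) → (Y,B) a pair (f, u) with f : X → Y, u : F X ⊗ A → B. *)

Section LS.
Context (S : LNL).
Notation C := (LC S).
Notation L := (LL S).
Notation F := (F S).
Notation U := (U S).

Definition LSHom (X : C) (A : L) (Y : C) (B : L) : Type :=
  (hom X Y * hom (F X ⊗ A) B)%type.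

Definition cX (X : C) : hom (F X) (F X ⊗ F X) := fmap F (diag X) ;; m_inv X X.
Definition wX (X : C) : hom (F X) munit := fmap F (bang X) ;; m1_inv.

Definition lscomp {X Y Z : C} {A B D : L}
  (fu : LSHom X A Y B) (gv : LSHom Y B Z D) : LSHom X A Z D :=
  (fst fu ;; fst gv,
   cX X ⊗ₘ idm A ;; eq_hom (assoc_ob (F X) (F X) A)
     ;; fmap F (fst fu) ⊗ₘ snd fu ;; snd gv).

Definition lsid (X : C) (A : L) : LSHom X A X A :=
  (idm X, wX X ⊗ₘ idm A ;; eq_hom (lunit_ob A)).

Definition lscast (X : C) {A A' : L} (e : A = A') : LSHom X A X A' :=
  (idm X, wX X ⊗ₘ eq_hom e ;; eq_hom (lunit_ob A')).

Definition bangS {X Y : C} {A B : L} (fu : LSHom X A Y B) :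
  LSHom X (F (U A)) Y (F (U B)) :=
  (fst fu,
   fmap F (eta X) ⊗ₘ idm (F (U A)) ;; m (U (F X)) (U A)
     ;; fmap F (n (F X) A) ;; fmap F (fmap U (snd fu))).

Definition compr {X Y : C} {A B : L} (fu : LSHom X A Y B) :
  hom (cprod X (U A)) (cprod Y (U B)) :=
  pair (p1 X (U A) ;; fst fu)
       (prodm (eta X) (idm (U A)) ;; n (F X) A ;; fmap U (snd fu)).

Definition Wm {X Y : C} {A B : L} (fu : LSHom X A Y B) :
  LSHom (cprod X (U A)) A (cprod Y (U B)) B :=
  (compr fu, fmap F (p1 X (U A)) ⊗ₘ idm A ;; snd fu).

Context (Ad : AddBiprod L).

Definition fib_inj2 (X : C) (A B : L) : LSHom X B X (bp Ad A B) :=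
  (idm X, wX X ⊗ₘ binj2 Ad A B ;; eq_hom (lunit_ob (bp Ad A B))).

Definition lspair {Z X Y : C} {D A B : L}
  (fu : LSHom Z D X A) (gv : LSHom Z D Y B) : LSHom Z D (cprod X Y) (bp Ad A B) :=
  (pair (fst fu) (fst gv), bpair Ad (snd fu) (snd gv)).

End LS.

Arguments lscomp {S X Y Z A B D} _ _.
Arguments LSHom : clear implicits.

Record GDSC := {
  G_lnl :> LNL;
  G_add : AddBiprod (LL G_lnl);
  (* (t.1): T X = (X, λ X) and T(h) = (h, Tm h) *)
  lam : LC G_lnl -> LL G_lnl;
  Tm : forall {X Y : LC G_lnl}, hom X Y -> hom (F G_lnl X ⊗ lam X) (lam Y);
  T_id : forall X, (idm X, Tm (idm X)) = lsid X (lam X);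
  T_comp : forall X Y Z (h : hom X Y) (k : hom Y Z),
      (h ;; k, Tm (h ;; k)) = lscomp (h, Tm h) (k, Tm k);
  (* φ_{X,Y} = ⟨T(π1), T(π2)⟩ is an isomorphism, with inverse phi_inv *)
  phi_inv : forall X Y : LC G_lnl,
      LSHom G_lnl (cprod X Y) (bp G_add (lam X) (lam Y)) (cprod X Y) (lam (cprod X Y));
  phi_inv1 : forall X Y,
      lscomp (lspair G_add (p1 X Y, Tm (p1 X Y)) (p2 X Y, Tm (p2 X Y))) (phi_inv X Y)
      = lsid (cprod X Y) (lam (cprod X Y));
  phi_inv2 : forall X Y,
      lscomp (phi_inv X Y) (lspair G_add (p1 X Y, Tm (p1 X Y)) (p2 X Y, Tm (p2 X Y)))
      = lsid (cprod X Y) (bp G_add (lam X) (lam Y));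
  t2 : forall A : LL G_lnl, lam (U G_lnl A) = A;
  (* (t.3), with i_2^{X,UA} : (X × UA, A) → T(X × UA) *)
  t3 : forall (X Y : LC G_lnl) (A B : LL G_lnl) (fu : LSHom G_lnl X A Y B),
      lscomp (Wm fu)
        (lscomp (lscast (cprod Y (U G_lnl B)) (eq_sym (t2 B)))
          (lscomp (fib_inj2 G_add (cprod Y (U G_lnl B)) (lam Y) (lam (U G_lnl B)))
                  (phi_inv Y (U G_lnl B))))
      = lscomp
          (lscomp (lscast (cprod X (U G_lnl A)) (eq_sym (t2 A)))
            (lscomp (fib_inj2 G_add (cprod X (U G_lnl A)) (lam X) (lam (U G_lnl A)))
                    (phi_inv X (U G_lnl A))))
          (compr fu, Tm (compr fu)) }.

Arguments Tm {g X Y} _.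
Arguments phi_inv {g} X Y.

Section Differential.
Context (S : GDSC).
Notation C := (LC S).
Notation L := (LL S).

Definition i2 (X Y : C) : LSHom S (cprod X Y) (lam Y) (cprod X Y) (lam (cprod X Y)) :=
  lscomp (fib_inj2 (G_add S) (cprod X Y) (lam X) (lam Y)) (phi_inv X Y).

Definition Dm {X Y : C} (h : hom X Y) : LSHom S X (lam X) X (lam Y) :=
  (idm X, Tm h).

Definition D2 {X Y Z : C} (h : hom (cprod X Y) Z) :
  LSHom S (cprod X Y) (lam Y) (cprod X Y) (lam Z) :=
  lscomp (i2 X Y) (Dm h).

(** 𝒟^X_A := D_2(π_2 ; η_{U A}) : (X × UA, A) → (X × UA, !A).
    The (identity) casts along (t.2) λ(U A) = A and λ(U !A) = !A make the
    typing literal. *)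
Definition scrD (X : C) (A : L) :
  LSHom S (cprod X (U S A)) A (cprod X (U S A)) (F S (U S A)) :=
  lscomp (lscast _ (eq_sym (t2 A)))
    (lscomp (D2 (p2 X (U S A) ;; eta (U S A)))
            (lscast _ (t2 (F S (U S A))))).

End Differential.

From Stdlib Require Import ProofIrrelevance.
From Corelib Require Import ssreflect.

(* After cancelling the common leading cast, axiom (t.3) moves W(f,u) past i_2, so the
   right-hand side becomes D_2(⦃(f,u)⦄ ; π_2 ; η).  Naturality and monoidality of η factor
   this map as ⟨π_1, π_2;η⟩ ; ⦃!^S(f,u)⦄ ; π_2.  Because φ is invertible,
   i_2 ; T⟨π_1, h⟩ = (⟨π_1, h⟩, D_2 h) ; i_2 and i_2 ; T(π_2) is the identity lift of π_2;
   with (t.3) for !^S(f,u) the right-hand side becomes 𝒟 followed by W(!^S(f,u)).  The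
   fibre components of W(!^S(f,u)) and !^S(W(f,u)) see the base only through π_1, which
   ⟨π_1, π_2;η⟩ preserves, so this is the left-hand side. *)

Section CategoryFacts.
Context {C : Category}.

Lemma comp_assoc_eq {A B D E : C} {f : hom A B} {g : hom B D} {h : hom A D} :
  f ;; g = h -> forall r : hom D E, f ;; (g ;; r) = h ;; r.
Proof. by move=> <- r; rewrite comp_assoc. Qed.

Lemma eq_hom_trans {A B D : C} (e : A = B) (e' : B = D) :
  eq_hom e ;; eq_hom e' = eq_hom (eq_trans e e').
Proof. by destruct e'; apply: comp_id_r. Qed.

Lemma eq_hom_irrelevant {A B : C} (e e' : A = B) : eq_hom e = eq_hom e'.
Proof. by rewrite (proof_irrelevance _ e e'). Qed.

Lemma eq_hom_refl {A : C} (e : A = A) : eq_hom e = idm A.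
Proof. by rewrite (proof_irrelevance _ e eq_refl). Qed.

End CategoryFacts.

Section MonoidalFacts.
Context {L : SSMC}.

Lemma tensm_comp_l {A B D : L} (f : hom A B) (g : hom B D) (E : L) :
  (f ;; g) ⊗ₘ idm E = f ⊗ₘ idm E ;; g ⊗ₘ idm E.
Proof. by rewrite -tensm_comp comp_id_l. Qed.

Lemma tensm_comp_r {A B D : L} (f : hom A B) (g : hom B D) (E : L) :
  idm E ⊗ₘ (f ;; g) = idm E ⊗ₘ f ;; idm E ⊗ₘ g.
Proof. by rewrite -tensm_comp comp_id_l. Qed.

Lemma tensm_split {A B A' B' : L} (f : hom A A') (g : hom B B') :
  f ⊗ₘ g = f ⊗ₘ idm B ;; idm A' ⊗ₘ g.
Proof. by rewrite -tensm_comp comp_id_l comp_id_r. Qed.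

Lemma eq_hom_tensm_l {A A' : L} (e : A = A') (B : L) :
  eq_hom e ⊗ₘ idm B = eq_hom (f_equal (fun x => x ⊗ B) e).
Proof. by destruct e; apply: tensm_id. Qed.

Lemma eq_hom_tensm_r (A : L) {B B' : L} (e : B = B') :
  idm A ⊗ₘ eq_hom e = eq_hom (f_equal (fun x => A ⊗ x) e).
Proof. by destruct e; apply: tensm_id. Qed.

End MonoidalFacts.

Section CartesianFacts.
Context {C : CartCat}.

Lemma pair_ext {Z X Y : C} (f g : hom Z (cprod X Y)) :
  f ;; p1 X Y = g ;; p1 X Y -> f ;; p2 X Y = g ;; p2 X Y -> f = g.
Proof. by move=> e1 e2; rewrite (pair_uniq f) (pair_uniq g) e1 e2. Qed.

Lemma comp_pair {W Z X Y : C} (h : hom W Z) (f : hom Z X) (g : hom Z Y) :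
  h ;; pair f g = pair (h ;; f) (h ;; g).
Proof. by apply: pair_ext; rewrite !comp_assoc ?pair_p1 ?pair_p2. Qed.

Lemma pair_p1_p2 (X Y : C) : pair (p1 X Y) (p2 X Y) = idm (cprod X Y).
Proof. by apply: pair_ext; rewrite ?pair_p1 ?pair_p2 comp_id_l. Qed.

Lemma pair_prodm {Z X Y X' Y' : C} (f : hom Z X) (g : hom Z Y)
  (f' : hom X X') (g' : hom Y Y') :
  pair f g ;; prodm f' g' = pair (f ;; f') (g ;; g').
Proof. by rewrite /prodm comp_pair -!comp_assoc pair_p1 pair_p2. Qed.

Lemma diag_prodm_cassoc (X : C) :
  diag X ;; prodm (diag X) (idm X) ;; cassoc X X X = diag X ;; prodm (idm X) (diag X).
Proof.
by rewrite /cassoc {1 3}/diag !pair_prodm !comp_id_l !comp_pair -!comp_assoc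
  !pair_p1 !pair_p2.
Qed.

End CartesianFacts.

Section LNLFacts.
Context {S : LNL}.
Notation F := (F S).

Lemma m_inv_nat {X Y X' Y' : LC S} (f : hom X X') (g : hom Y Y') :
  m_inv X Y ;; fmap F f ⊗ₘ fmap F g = fmap F (prodm f g) ;; m_inv X' Y'.
Proof.
rewrite -[LHS]comp_id_r -(m_iso1 X' Y') -comp_assoc (comp_assoc (m_inv X Y)) m_nat.
by rewrite -comp_assoc m_iso2 comp_id_l.
Qed.

Lemma m_inv_nat_l {X Y X' : LC S} (f : hom X X') :
  m_inv X Y ;; fmap F f ⊗ₘ idm (F Y) = fmap F (prodm f (idm Y)) ;; m_inv X' Y.
Proof. by rewrite -m_inv_nat fmap_id. Qed.

Lemma m_inv_nat_r {X Y Y' : LC S} (f : hom Y Y') :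
  m_inv X Y ;; idm (F X) ⊗ₘ fmap F f = fmap F (prodm (idm X) f) ;; m_inv X Y'.
Proof. by rewrite -m_inv_nat fmap_id. Qed.

Lemma m_inv_lunit (X : LC S) :
  m_inv cterm X ;; (m1_inv ⊗ₘ idm (F X) ;; eq_hom (lunit_ob (F X))) = fmap F (p2 cterm X).
Proof.
rewrite -comp_assoc -m_lunit -!comp_assoc (comp_assoc (m_inv cterm X)) -tensm_comp m1_iso2.
by rewrite comp_id_l tensm_id comp_id_r m_iso2 comp_id_l.
Qed.

Lemma m_inv_runit (X : LC S) :
  m_inv X cterm ;; (idm (F X) ⊗ₘ m1_inv ;; eq_hom (runit_ob (F X))) = fmap F (p1 X cterm).
Proof.
rewrite -comp_assoc -m_runit -!comp_assoc (comp_assoc (m_inv X cterm)) -tensm_comp m1_iso2.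
by rewrite comp_id_l tensm_id comp_id_r m_iso2 comp_id_l.
Qed.

Lemma m_inv_assoc (X Y Z : LC S) :
  eq_hom (assoc_ob (F X) (F Y) (F Z)) =
  m X Y ⊗ₘ idm (F Z) ;; m _ Z ;; fmap F (cassoc X Y Z) ;; m_inv _ _
    ;; idm (F X) ⊗ₘ m_inv Y Z.
Proof.
rewrite m_assoc !comp_assoc (comp_assoc_eq (m_iso1 _ _)) comp_id_l -tensm_comp m_iso1.
by rewrite comp_id_l tensm_id comp_id_r.
Qed.

Lemma wX_nat {X Y : LC S} (f : hom X Y) : fmap F f ;; wX Y = wX X.
Proof. by rewrite /wX -comp_assoc -fmap_comp (bang_uniq (f ;; bang Y)). Qed.

Lemma cX_nat {X Y : LC S} (f : hom X Y) :
  fmap F f ;; cX Y = cX X ;; fmap F f ⊗ₘ fmap F f.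
Proof.
rewrite /cX comp_assoc m_inv_nat -!comp_assoc -!fmap_comp /diag comp_pair pair_prodm.
by rewrite comp_id_l !comp_id_r.
Qed.

Lemma cX_counit_l (X : LC S) :
  cX X ;; wX X ⊗ₘ idm (F X) ;; eq_hom (lunit_ob (F X)) = idm (F X).
Proof.
rewrite /cX /wX tensm_comp_l !comp_assoc (comp_assoc_eq (m_inv_nat_l _)).
rewrite !comp_assoc m_inv_lunit -!fmap_comp -fmap_id.
by rewrite /prodm pair_p2 comp_id_r /diag pair_p2.
Qed.

Lemma cX_counit_r (X : LC S) :
  cX X ;; idm (F X) ⊗ₘ wX X ;; eq_hom (runit_ob (F X)) = idm (F X).
Proof.
rewrite /cX /wX tensm_comp_r !comp_assoc (comp_assoc_eq (m_inv_nat_r _)).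
rewrite !comp_assoc m_inv_runit -!fmap_comp -fmap_id.
by rewrite /prodm pair_p1 comp_id_r /diag pair_p1.
Qed.

Lemma cX_coassoc (X : LC S) :
  cX X ;; cX X ⊗ₘ idm (F X) ;; eq_hom (assoc_ob _ _ _) = cX X ;; idm (F X) ⊗ₘ cX X.
Proof.
rewrite m_inv_assoc /cX tensm_comp_l tensm_comp_r !comp_assoc.
rewrite (comp_assoc_eq (m_inv_nat_l _)) (comp_assoc_eq (m_inv_nat_r _)).
rewrite -(comp_assoc (_ ⊗ₘ _)) -tensm_comp m_iso2 comp_id_l tensm_id comp_id_l.
rewrite !comp_assoc (comp_assoc_eq (m_iso2 _ _)) comp_id_l.
by rewrite -!comp_assoc -!fmap_comp diag_prodm_cassoc.
Qed.

End LNLFacts.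

Section LinearSlices.
Context {S : LNL}.
Notation F := (F S).

Lemma cX_tens_counit_l (P : LC S) (A : LL S) :
  cX P ⊗ₘ idm A ;; eq_hom (assoc_ob _ _ A) ;; wX P ⊗ₘ idm (F P ⊗ A)
    ;; eq_hom (lunit_ob _) = idm (F P ⊗ A).
Proof.
rewrite -tensm_id !comp_assoc (comp_assoc_eq (eq_sym (assoc_nat _ _ _))) !comp_assoc.
have -> : eq_hom (assoc_ob munit (F P) A) ;; eq_hom (lunit_ob (F P ⊗ A))
          = eq_hom (lunit_ob (F P)) ⊗ₘ idm A.
  by rewrite eq_hom_tensm_l eq_hom_trans; apply: eq_hom_irrelevant.
by rewrite -!tensm_comp !comp_id_l -comp_assoc cX_counit_l tensm_id.
Qed.

Lemma cX_tens_counit_r (P : LC S) (A : LL S) :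
  cX P ⊗ₘ idm A ;; eq_hom (assoc_ob _ _ A)
    ;; idm (F P) ⊗ₘ (wX P ⊗ₘ idm A ;; eq_hom (lunit_ob A)) = idm (F P ⊗ A).
Proof.
rewrite tensm_comp_r !comp_assoc (comp_assoc_eq (eq_sym (assoc_nat _ _ _))) !comp_assoc.
have -> : eq_hom (assoc_ob (F P) munit A) ;; idm (F P) ⊗ₘ eq_hom (lunit_ob A)
          = eq_hom (runit_ob (F P)) ⊗ₘ idm A.
  by rewrite eq_hom_tensm_l eq_hom_tensm_r eq_hom_trans; apply: eq_hom_irrelevant.
by rewrite -!tensm_comp !comp_id_l -comp_assoc cX_counit_r tensm_id.
Qed.

Lemma cX_tens_coassoc (P : LC S) (A : LL S) :
  cX P ⊗ₘ idm A ;; eq_hom (assoc_ob _ _ A) ;; cX P ⊗ₘ idm (F P ⊗ A)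
    ;; eq_hom (assoc_ob _ _ _)
  = cX P ⊗ₘ idm A ;; eq_hom (assoc_ob _ _ A)
    ;; idm (F P) ⊗ₘ (cX P ⊗ₘ idm A ;; eq_hom (assoc_ob _ _ _)).
Proof.
rewrite -tensm_id tensm_comp_r !comp_assoc (comp_assoc_eq (eq_sym (assoc_nat _ _ _))).
rewrite -[idm (F P) ⊗ₘ eq_hom _]comp_id_r (comp_assoc_eq (eq_sym (assoc_nat _ _ _))).
rewrite comp_id_r -!comp_assoc -!tensm_comp !comp_id_l -(cX_coassoc P).
rewrite (tensm_comp_l _ (eq_hom _)) !comp_assoc; do 2 f_equal.
by rewrite eq_hom_tensm_l eq_hom_tensm_r !eq_hom_trans; apply: eq_hom_irrelevant.
Qed.

Lemma lscomp_wX {P Q R : LC S} {A B B' : LL S} (f : hom P Q)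
  (u : hom (F P ⊗ A) B) (x : hom Q R) (g : hom B B') :
  lscomp (f, u) (x, wX Q ⊗ₘ g ;; eq_hom (lunit_ob B')) = (f ;; x, u ;; g).
Proof.
rewrite /lscomp /=; f_equal.
rewrite !comp_assoc (comp_assoc_eq (eq_sym (tensm_comp _ _ _ _))) wX_nat (tensm_split (wX P)).
by rewrite !comp_assoc lunit_nat -!comp_assoc cX_tens_counit_l comp_id_l.
Qed.

Lemma lscomp_snd {P Q R R' : LC S} {A B D : LL S} (a : LSHom S P A Q B)
  (x : hom Q R) (c : LSHom S Q B R' D) :
  lscomp a (x, snd c) = (fst a ;; x, snd (lscomp a c)).
Proof. by []. Qed.

Lemma lscomp_id_r {P Q : LC S} {A B : LL S} (a : LSHom S P A Q B) :
  lscomp a (lsid Q B) = a.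
Proof. by case: a => f u; rewrite /lsid lscomp_wX !comp_id_r. Qed.

Lemma lscomp_id_l {P Q : LC S} {A B : LL S} (a : LSHom S P A Q B) :
  lscomp (lsid P A) a = a.
Proof.
case: a => f u; rewrite /lscomp /lsid /=; f_equal; first exact: comp_id_l.
by rewrite fmap_id cX_tens_counit_r comp_id_l.
Qed.

Lemma lscomp_assoc {P Q R T : LC S} {A B D E : LL S} (a : LSHom S P A Q B)
  (b : LSHom S Q B R D) (c : LSHom S R D T E) :
  lscomp (lscomp a b) c = lscomp a (lscomp b c).
Proof.
case: a b c => [f u] [g v] [h w]; rewrite /lscomp /=; f_equal; first exact: comp_assoc.
have -> : fmap F (f ;; g)
            ⊗ₘ (cX P ⊗ₘ idm A ;; eq_hom (assoc_ob _ _ A) ;; fmap F f ⊗ₘ u ;; v)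
          = idm (F P) ⊗ₘ (cX P ⊗ₘ idm A ;; eq_hom (assoc_ob _ _ A))
            ;; fmap F f ⊗ₘ (fmap F f ⊗ₘ u) ;; fmap F g ⊗ₘ v.
  by rewrite -!tensm_comp comp_id_l fmap_comp.
have cX_past_u : fmap F f ⊗ₘ u ;; cX Q ⊗ₘ idm B
                 = cX P ⊗ₘ idm (F P ⊗ A) ;; (fmap F f ⊗ₘ fmap F f) ⊗ₘ u.
  by rewrite -!tensm_comp comp_id_l comp_id_r cX_nat.
rewrite !comp_assoc (comp_assoc_eq cX_past_u) !comp_assoc (comp_assoc_eq (assoc_nat _ _ _)).
by rewrite -!comp_assoc cX_tens_coassoc.
Qed.

Lemma lscomp_lscast {P Q : LC S} {A B B' : LL S} (f : hom P Q) (u : hom (F P ⊗ A) B)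
  (e : B = B') : lscomp (f, u) (lscast Q e) = (f, u ;; eq_hom e).
Proof. by rewrite /lscast lscomp_wX comp_id_r. Qed.

Lemma lscast_trans (P : LC S) {A B D : LL S} (e : A = B) (e' : B = D) :
  lscomp (lscast P e) (lscast P e') = lscast P (eq_trans e e').
Proof.
rewrite {1}/lscast lscomp_lscast /lscast !comp_assoc -lunit_nat -comp_assoc -tensm_comp.
by rewrite comp_id_r eq_hom_trans.
Qed.

Lemma lscast_refl (P : LC S) {A : LL S} (e : A = A) : lscast P e = lsid P A.
Proof. by rewrite /lscast /lsid eq_hom_refl. Qed.

Lemma lscomp_reindex {P Q R X R' : LC S} {D A E : LL S} (g : hom P Q)
  (v : hom (F P ⊗ D) A) (x : hom Q R) (k : hom Q X) (c : LSHom S X A R' E) :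
  lscomp (g, v) (x, fmap F k ⊗ₘ idm A ;; snd c) = (g ;; x, snd (lscomp (g ;; k, v) c)).
Proof.
rewrite /lscomp /=; f_equal.
by rewrite !comp_assoc (comp_assoc_eq (eq_sym (tensm_comp _ _ _ _))) comp_id_r fmap_comp.
Qed.

End LinearSlices.

Section BangS.
Context {S : LNL}.
Notation F := (F S).
Notation U := (U S).

Lemma compr_eta {X Y : LC S} {A B : LL S} (fu : LSHom S X A Y B) :
  compr fu ;; (p2 Y (U B) ;; eta (U B))
  = pair (p1 X (U A)) (p2 X (U A) ;; eta (U A)) ;; compr (bangS fu) ;; p2 _ _.
Proof.
have eta_twice : pair (p1 X (U A)) (p2 X (U A) ;; eta (U A)) ;; prodm (eta X) (idm _)
                   ;; prodm (fmap U (fmap F (eta X))) (idm _)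
                 = prodm (eta X) (idm _) ;; prodm (eta _) (eta _).
  by rewrite !pair_prodm !comp_id_r !comp_assoc (eta_nat (eta X)).
rewrite /compr /bangS /= !comp_assoc (comp_assoc_eq (pair_p2 _ _)) pair_p2 !fmap_comp.
rewrite !comp_assoc eta_nat (comp_assoc_eq (eq_sym (n_nat _ _))) fmap_id -!comp_assoc.
by rewrite eta_twice !comp_assoc; f_equal; rewrite -!comp_assoc -eta_mon -eta_nat.
Qed.

Lemma bangS_Wm {X Y : LC S} {A B : LL S} (fu : LSHom S X A Y B) :
  bangS (Wm fu) = (compr fu, fmap F (p1 X (U A)) ⊗ₘ idm _ ;; snd (bangS fu)).
Proof.
rewrite /bangS /Wm /=; f_equal.
rewrite !fmap_comp !comp_assoc (comp_assoc_eq (eq_sym (fmap_comp _ _ _))) -n_nat.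
rewrite fmap_id fmap_comp !comp_assoc (comp_assoc_eq (eq_sym (m_nat _ _))) fmap_id.
by rewrite !comp_assoc !(comp_assoc_eq (eq_sym (tensm_comp _ _ _ _))) -!fmap_comp
  (eta_nat (p1 X (U A))).
Qed.

End BangS.

Section BiproductFacts.
Context {L : SSMC} (Ad : AddBiprod L).

Lemma comp_bpair {W C A B : L} (h : hom W C) (f : hom C A) (g : hom C B) :
  h ;; bpair Ad f g = bpair Ad (h ;; f) (h ;; g).
Proof. by rewrite (bpair_uniq (h ;; bpair Ad f g)) !comp_assoc bpair_pi1 bpair_pi2. Qed.

Lemma bpair_zero_l {C A B : L} (g : hom C B) : bpair Ad (zero Ad C A) g = g ;; binj2 Ad A B.
Proof.
rewrite (bpair_uniq (g ;; binj2 Ad A B)) !comp_assoc binj2_pi1 binj2_pi2.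
by rewrite comp_zero_r comp_id_r.
Qed.

End BiproductFacts.

Section TangentFacts.
Context (S : GDSC).
Notation Ad := (G_add S).
Local Notation T h := (h, Tm h).

Definition lsproj1 (X Y : LC S) (A B : LL S) : LSHom S (cprod X Y) (bp Ad A B) X A :=
  (p1 X Y, wX _ ⊗ₘ bpi1 Ad A B ;; eq_hom (lunit_ob A)).

Definition lsproj2 (X Y : LC S) (A B : LL S) : LSHom S (cprod X Y) (bp Ad A B) Y B :=
  (p2 X Y, wX _ ⊗ₘ bpi2 Ad A B ;; eq_hom (lunit_ob B)).

Lemma lscomp_lspair {P Z X Y : LC S} {E D A B : LL S} (a : LSHom S P E Z D)
  (b : LSHom S Z D X A) (c : LSHom S Z D Y B) :
  lscomp a (lspair Ad b c) = lspair Ad (lscomp a b) (lscomp a c).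
Proof.
by case: a b c => [f u] [g v] [h w]; rewrite /lscomp /lspair /= comp_pair comp_bpair.
Qed.

Lemma lspair_lsproj1 {Z X Y : LC S} {D A B : LL S} (b : LSHom S Z D X A)
  (c : LSHom S Z D Y B) : lscomp (lspair Ad b c) (lsproj1 X Y A B) = b.
Proof. by rewrite /lsproj1 lscomp_wX /= pair_p1 bpair_pi1; case: b. Qed.

Lemma lspair_lsproj2 {Z X Y : LC S} {D A B : LL S} (b : LSHom S Z D X A)
  (c : LSHom S Z D Y B) : lscomp (lspair Ad b c) (lsproj2 X Y A B) = c.
Proof. by rewrite /lsproj2 lscomp_wX /= pair_p2 bpair_pi2; case: c. Qed.

Lemma fst_phi_inv (X Y : LC S) : fst (phi_inv X Y) = idm (cprod X Y).
Proof.
by have := f_equal fst (phi_inv1 X Y); rewrite /lscomp /lspair /= pair_p1_p2 comp_id_l.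
Qed.

Lemma fst_i2 (X Y : LC S) : fst (i2 X Y) = idm (cprod X Y).
Proof. by rewrite /i2 /= fst_phi_inv comp_id_l. Qed.

Lemma fst_D2 {X Y Z : LC S} (h : hom (cprod X Y) Z) : fst (D2 h) = idm (cprod X Y).
Proof. by rewrite -[LHS]/(fst (i2 X Y) ;; idm _) fst_i2 comp_id_l. Qed.

Lemma i2_phi (X Y : LC S) :
  lscomp (i2 X Y) (lspair Ad (T (p1 X Y)) (T (p2 X Y)))
  = fib_inj2 Ad (cprod X Y) (lam X) (lam Y).
Proof. by rewrite /i2 lscomp_assoc phi_inv2 lscomp_id_r. Qed.

Lemma fib_inj2_lsproj1 (X Y : LC S) (A B : LL S) :
  lscomp (fib_inj2 Ad (cprod X Y) A B) (lsproj1 X Y A B) = (p1 X Y, zero Ad _ _).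
Proof.
rewrite /lsproj1 lscomp_wX /= comp_id_l (tensm_split (wX _)) !comp_assoc.
by rewrite (comp_assoc_eq (lunit_nat _)) !comp_assoc binj2_pi1 !comp_zero_r.
Qed.

Lemma fib_inj2_lsproj2 (X Y : LC S) (A B : LL S) :
  lscomp (fib_inj2 Ad (cprod X Y) A B) (lsproj2 X Y A B)
  = (p2 X Y, wX _ ⊗ₘ idm B ;; eq_hom (lunit_ob B)).
Proof.
rewrite /lsproj2 lscomp_wX /= comp_id_l (tensm_split (wX _)) !comp_assoc.
by rewrite (comp_assoc_eq (lunit_nat _)) !comp_assoc binj2_pi2 comp_id_r.
Qed.

Lemma i2_T_p1 (X Y : LC S) : lscomp (i2 X Y) (T (p1 X Y)) = (p1 X Y, zero Ad _ _).
Proof.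
by rewrite -(lspair_lsproj1 (T (p1 X Y)) (T (p2 X Y))) -lscomp_assoc i2_phi fib_inj2_lsproj1.
Qed.

Lemma i2_T_p2 (X Y : LC S) :
  lscomp (i2 X Y) (T (p2 X Y)) = (p2 X Y, wX _ ⊗ₘ idm (lam Y) ;; eq_hom (lunit_ob _)).
Proof.
by rewrite -(lspair_lsproj2 (T (p1 X Y)) (T (p2 X Y))) -lscomp_assoc i2_phi fib_inj2_lsproj2.
Qed.

Lemma i2_T {X Y Z : LC S} (h : hom (cprod X Y) Z) :
  lscomp (i2 X Y) (T h) = (h, snd (D2 h)).
Proof. by rewrite -[Tm h]/(snd (Dm h)) lscomp_snd fst_i2 comp_id_l. Qed.

Lemma i2_T_pair {X Y Z : LC S} (h : hom (cprod X Y) Z) :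
  lscomp (i2 X Y) (T (pair (p1 X Y) h)) = lscomp (pair (p1 X Y) h, snd (D2 h)) (i2 X Z).
Proof.
have T_pair_phi : lscomp (T (pair (p1 X Y) h)) (lspair Ad (T (p1 X Z)) (T (p2 X Z)))
                  = lspair Ad (T (p1 X Y)) (T h).
  by rewrite lscomp_lspair -!T_comp pair_p1 pair_p2.
have i2_lspair : lscomp (i2 X Y) (lspair Ad (T (p1 X Y)) (T h))
                 = lscomp (pair (p1 X Y) h, snd (D2 h)) (fib_inj2 Ad _ (lam X) (lam Z)).
  by rewrite lscomp_lspair i2_T_p1 i2_T /fib_inj2 lscomp_wX comp_id_r /lspair /= bpair_zero_l.
rewrite -[LHS]lscomp_id_r -(phi_inv1 X Z) -lscomp_assoc (lscomp_assoc (i2 X Y)) T_pair_phi.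
by rewrite i2_lspair lscomp_assoc.
Qed.

Lemma i2_T_compr {X Y : LC S} {A B : LL S} (fu : LSHom S X A Y B) :
  lscomp (i2 X (U S A)) (T (compr fu))
  = lscomp (lscast _ (t2 A))
      (lscomp (Wm fu) (lscomp (lscast _ (eq_sym (t2 B))) (i2 Y (U S B)))).
Proof. by rewrite (t3 fu) -!lscomp_assoc lscast_trans lscast_refl lscomp_id_l. Qed.

Local Notation eta_p2 X A := (p2 X (U S A) ;; eta (U S A)).

Lemma lscomp_T_Dm {X Y Z : LC S} (k : hom X Y) (h : hom Y Z) :
  lscomp (T k) (Dm h) = (k ;; idm Y, snd (Dm (k ;; h))).
Proof. by rewrite -[snd (Dm (k ;; h))]/(snd (T (k ;; h))) T_comp. Qed.

Lemma i2_T_Dm {X Y Z W : LC S} (k : hom (cprod X Y) Z) (h : hom Z W) :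
  lscomp (i2 X Y) (lscomp (T k) (Dm h)) = (k, snd (D2 (k ;; h))).
Proof. by rewrite lscomp_T_Dm lscomp_snd fst_i2 comp_id_l comp_id_r. Qed.

Lemma D2_lscast {X Y Z : LC S} {A : LL S} (h : hom (cprod X Y) Z) (e : lam Z = A) :
  lscomp (D2 h) (lscast _ e) = (idm _, snd (D2 h) ;; eq_hom e).
Proof. by rewrite -[D2 h]/(fst (D2 h), snd (D2 h)) lscomp_lscast fst_D2. Qed.

Lemma Wm_D2 {X Y Z : LC S} {A B : LL S} (fu : LSHom S X A Y B)
  (g : hom (cprod Y (U S B)) Z) :
  lscomp (Wm fu) (lscomp (lscast _ (eq_sym (t2 B))) (D2 g))
  = lscomp (lscast _ (eq_sym (t2 A)))
      (lscomp (i2 X (U S A)) (lscomp (T (compr fu)) (Dm g))).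
Proof.
by rewrite /D2 -(lscomp_assoc (lscast _ _) (i2 _ _)) -lscomp_assoc (t3 fu) !lscomp_assoc.
Qed.

Lemma D2_compr_eta {X Y : LC S} {A B : LL S} (fu : LSHom S X A Y B) :
  snd (D2 (compr fu ;; eta_p2 Y B))
  = snd (lscomp (p1 X (U S A), snd (D2 (eta_p2 X A)) ;; eq_hom (t2 (F S (U S A))))
                (bangS fu))
    ;; eq_hom (eq_sym (t2 (F S (U S B)))).
Proof.
rewrite -[LHS]/(snd (lscomp (i2 _ _) (T (compr fu ;; eta_p2 Y B)))) compr_eta !T_comp.
(* [i2] is itself an [lscomp], which blanket reassociation would unfold; hence the
   targeted rewrites. *)
rewrite -!lscomp_assoc i2_T_pair (lscomp_assoc _ (i2 _ _)) i2_T_compr.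
rewrite lscomp_assoc (lscomp_assoc (lscast _ _)) (lscomp_assoc (Wm _)).
rewrite (lscomp_assoc (lscast _ _) (i2 _ _)) i2_T_p2 -!lscomp_assoc lscomp_lscast /Wm.
by rewrite lscomp_reindex lscomp_lscast lscomp_wX comp_id_r pair_p1.
Qed.

End TangentFacts.

Theorem proposition4p25 (S : GDSC) (X Y : LC S) (A B : LL S)
  (fu : LSHom S X A Y B) :
  lscomp (scrD X A) (bangS (Wm fu)) = lscomp (Wm fu) (scrD Y B).
Proof.
rewrite /scrD -(lscomp_assoc (lscast _ (eq_sym (t2 B)))) -(lscomp_assoc (Wm fu)) Wm_D2.
rewrite D2_lscast lscomp_assoc bangS_Wm lscomp_reindex.
rewrite lscomp_assoc i2_T_Dm lscomp_lscast D2_compr_eta.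
by rewrite !comp_id_l comp_assoc eq_hom_trans eq_hom_refl comp_id_r.
Qed.
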